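(* The rational group $\mathcal{R}$ is flexible: for every pair $E_1,E_2$ of proper nonempty clopen subsets of $\{0,1\}^\omega$ there exists $g\in\mathcal{R}$ with $g(E_1)\subseteq E_2$.
   Context: An asynchronous binary transducer is $(S,s_0,t,o)$ with $S$ finite, $s_0\in S$, $t\colon S\times\{0,1\}\to S$, $o\colon S\times\{0,1\}\to\{0,1\}^*$. For a state $s$ and sequence $\sigma_1\sigma_2\cdots$ let $s_1=s$, $s_{n+1}=t(s_n,\sigma_n)$, and $o(s,\sigma_1\sigma_2\cdots)=o(s_1,\sigma_1)o(s_2,\sigma_2)\cdots$. A homeomorphism $f$ of $\{0,1\}^\omega$ is rational if some transducer satisfies $f(\psi)=o(s_0,\psi)$ for all $\psi$; $\mathcal{R}$ is the group of rational homeomorphisms. *)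

From HB Require Import structures.
From mathcomp Require Import all_boot all_order all_algebra.
From mathcomp Require Import all_classical all_reals all_analysis.

Set Implicit Arguments.
Unset Strict Implicit.
Unset Printing Implicit Defensive.

Local Open Scope classical_set_scope.

(* {0,1}^omega is [cantor_space] = nat -> bool with the product topology. *)

Definition homeomorphism (T : topologicalType) (f : T -> T) : Prop :=
  exists g : T -> T,
    [/\ cancel f g, cancel g f, continuous f & continuous g].

(* Asynchronous binary transducer (S, s0, t, o), S finite. *)
Record transducer := Transducer {
  tr_state : finType;
  tr_init : tr_state;
  tr_trans : tr_state -> bool -> tr_state;
  tr_out : tr_state -> bool -> seq bool }.

(* s_1 = s, s_{n+1} = t(s_n, sigma_n)  (0-indexed: run 0 = s). *)
Fixpoint tr_run (A : transducer) (s : tr_state A) (psi : nat -> bool) (n : nat)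
  : tr_state A :=
  match n with
  | 0 => s
  | n'.+1 => tr_trans (tr_run s psi n') (psi n')
  end.

Definition tr_outprefix (A : transducer) (s : tr_state A) (psi : nat -> bool)
  (m : nat) : seq bool :=
  flatten [seq tr_out (tr_run s psi n) (psi n) | n <- iota 0 m].

Definition is_prefix (w : seq bool) (phi : nat -> bool) : Prop :=
  forall i, i < size w -> nth false w i = phi i.

(* o(s, psi) = phi : the infinite concatenation of outputs is the infinite
   sequence phi (every finite concatenation is a prefix of phi, and the
   concatenations have unbounded length). *)
Definition tr_output_eq (A : transducer) (s : tr_state A) (psi phi : nat -> bool)
  : Prop :=
  (forall m, is_prefix (tr_outprefix s psi m) phi) /\
  (forall k, exists m, k <= size (tr_outprefix s psi m)).

Definition rational_homeo (f : cantor_space -> cantor_space) : Prop :=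
  homeomorphism f /\
  exists A : transducer, forall psi, tr_output_eq (tr_init A) psi (f psi).

From HB Require Import structures.
From mathcomp Require Import all_boot all_order all_algebra.
From mathcomp Require Import all_classical all_reals all_analysis.
From mathcomp Require Import zify.

Set Implicit Arguments.
Unset Strict Implicit.
Unset Printing Implicit Defensive.

Local Open Scope classical_set_scope.

(* Pick x0 outside E1 and x2 in E2.  Since E1 is closed and E2 open, for N
   large enough the cylinder [a] (the set [is_prefix a]) of the length-N prefix
   a of x0 misses E1, and the cylinder [b] of the length-N prefix b of x2 lies
   in E2.  The map g with g(x) = b x for x outside [a], g(a y) = y for y outside
   [b] and g(a b z) = b a z is inverted by the same map with a and b exchanged,
   and it sends E1 into [b], hence into E2.  As g only rewrites the first 2N
   bits, a transducer that buffers 2N bits, emits their image and then copies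
   its input computes it. *)

Definition prepend (w : seq bool) (z : nat -> bool) : nat -> bool :=
  fun i => if i < size w then nth false w i else z (i - size w).

Definition sdrop (n : nat) (z : nat -> bool) : nat -> bool := fun i => z (i + n).

Lemma prepend_cat w1 w2 z : prepend (w1 ++ w2) z = prepend w1 (prepend w2 z).
Proof.
apply: funext => i; rewrite /prepend size_cat nth_cat.
have [i_lt|i_ge] := ltnP i (size w1); first by rewrite ltn_addr.
by rewrite ltn_subLR // subnDA; case: ifP.
Qed.

Lemma prepend_mkseq_sdrop n z : prepend (mkseq z n) (sdrop n z) = z.
Proof.
apply: funext => i; rewrite /prepend /sdrop size_mkseq.
by case: ltnP => [i_lt|/subnK->]; first rewrite nth_mkseq.
Qed.

Lemma sdrop_prepend w z : sdrop (size w) (prepend w z) = z.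
Proof. by apply: funext => i; rewrite /sdrop /prepend ltnNge leq_addl addnK. Qed.

Lemma is_prefixP w z : reflect (is_prefix w z) (mkseq z (size w) == w).
Proof.
apply: (iffP eqP) => [<- i|pre_wz].
  by rewrite size_mkseq => i_lt; rewrite nth_mkseq.
apply: (@eq_from_nth _ false); rewrite size_mkseq // => i i_lt.
by rewrite nth_mkseq // pre_wz.
Qed.

Lemma mkseq_prepend w z : mkseq (prepend w z) (size w) = w.
Proof. by apply/eqP/is_prefixP => i i_lt; rewrite /prepend i_lt. Qed.

Lemma is_prefix_prepend w z : is_prefix w (prepend w z).
Proof. exact/is_prefixP/eqP/mkseq_prepend. Qed.

Lemma prepend_split n x :
  prepend (mkseq x n ++ mkseq (sdrop n x) n) (sdrop n (sdrop n x)) = x.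
Proof. by rewrite prepend_cat !prepend_mkseq_sdrop. Qed.

Lemma prepend_sdrop_prefix w x :
  is_prefix w x -> prepend w (sdrop (size w) x) = x.
Proof. by move=> /is_prefixP/eqP {1}<-; rewrite prepend_mkseq_sdrop. Qed.

Lemma is_prefix_mkseqW {m n x y} : m <= n ->
  is_prefix (mkseq x n) y -> is_prefix (mkseq x m) y.
Proof.
move=> le_mn pre_y i; rewrite size_mkseq => i_lt.
rewrite -(pre_y i) ?size_mkseq ?nth_mkseq //; exact: leq_trans le_mn.
Qed.

Lemma is_prefix_prepend_cat w z k : is_prefix (w ++ mkseq z k) (prepend w z).
Proof.
move=> i; rewrite size_cat size_mkseq nth_cat /prepend => i_lt.
by case: ltnP => // i_ge; rewrite nth_mkseq //; lia.
Qed.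

Lemma nbhs_is_prefix (x : cantor_space) n : nbhs x (is_prefix (mkseq x n)).
Proof.
pose agree (i : 'I_n) (y : cantor_space) := x i = y i.
have : \forall y \near x, forall i, agree i y.
  apply: (@filter_forall _ _ agree (nbhs x)) => i.
  apply: (@proj_continuous nat (fun=> bool) i x [set b | x i = b]).
  by apply: open_nbhs_nbhs; split; [exact: discrete_open|].
apply: filterS => y xy i; rewrite size_mkseq => i_lt.
by rewrite nth_mkseq // (xy (Ordinal i_lt)).
Qed.

Lemma nbhs_prefix_sub (x : cantor_space) (U : set cantor_space) :
  nbhs x U -> exists n, is_prefix (mkseq x n) `<=` U.
Proof.
pose G := filter_from [set: nat] (fun n => is_prefix (mkseq x n)).
have G_filter : Filter G.
  apply: filter_from_filter; first by exists 0.
  move=> m n _ _; exists (maxn m n) => // y pre_y.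
  by split; apply: is_prefix_mkseqW pre_y; rewrite ?leq_maxl ?leq_maxr.
have : G --> x.
  apply/cvg_sup => i A /= -[B [[C _ <-] Cx] BA].
  exists i.+1 => // y pre_y; apply: BA; rewrite /= -(pre_y i) ?size_mkseq //.
  by rewrite nth_mkseq.
by move=> /(_ U) GU /GU [n _ sub]; exists n.
Qed.

Definition prefix_subst (M : nat) (tau : seq bool -> seq bool) (x : nat -> bool)
  : nat -> bool :=
  prepend (tau (mkseq x M)) (sdrop M x).

Lemma prefix_subst_prepend M tau w z : size w = M ->
  prefix_subst M tau (prepend w z) = prepend (tau w) z.
Proof. by move=> <-; rewrite /prefix_subst mkseq_prepend sdrop_prepend. Qed.

Lemma prefix_subst_continuous M tau :
  continuous (prefix_subst M tau : cantor_space -> cantor_space).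
Proof.
move=> x U /nbhs_prefix_sub[n sub]; apply: filterS (nbhs_is_prefix x (M + n)).
move=> y pre_y; apply: sub => i; rewrite size_mkseq => i_lt.
have xy j : j < M + n -> y j = x j.
  by move=> j_lt; rewrite -(pre_y j) ?size_mkseq ?nth_mkseq.
rewrite nth_mkseq // /prefix_subst /prepend /sdrop.
have /is_prefixP : is_prefix (mkseq x M) y.
  by apply: is_prefix_mkseqW pre_y; rewrite leq_addr.
rewrite size_mkseq => /eqP->.
by case: ifP => // _; rewrite xy //; lia.
Qed.

Lemma tr_outprefixS (A : transducer) (s : tr_state A) psi m :
  tr_outprefix s psi m.+1 =
  tr_outprefix s psi m ++ tr_out (tr_run s psi m) (psi m).
Proof. by rewrite /tr_outprefix -addn1 iotaD map_cat flatten_cat /= cats0. Qed.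

Section BlockTransducer.
Variables (M : nat) (tau : seq bool -> seq bool).
Hypothesis M_gt0 : 0 < M.

(* the number of bits read so far, capped at M, and the buffered bits *)
Definition block_state := ('I_M.+1 * {ffun 'I_M -> bool})%type.

Definition block_write (f : {ffun 'I_M -> bool}) (k : nat) (c : bool) :=
  [ffun j : 'I_M => if j == k :> nat then c else f j].

Definition block_trans (s : block_state) (c : bool) : block_state :=
  if s.1 < M then (inord s.1.+1, block_write s.2 s.1 c) else s.

Definition block_out (s : block_state) (c : bool) : seq bool :=
  if s.1.+1 == M then tau (codom (block_write s.2 s.1 c))
  else if s.1 == M :> nat then [:: c] else [::].

Definition block_transducer : transducer :=
  Transducer ((ord0, [ffun=> false]) : block_state) block_trans block_out.

Definition prefix_buffer (psi : nat -> bool) (n : nat) : {ffun 'I_M -> bool} :=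
  [ffun j : 'I_M => if j < n then psi j else false].

Lemma block_write_prefix_buffer psi n :
  block_write (prefix_buffer psi n) n (psi n) = prefix_buffer psi n.+1.
Proof.
apply/ffunP => j; rewrite !ffunE [_ < n.+1]ltnS (leq_eqVlt j n).
by case: eqVneq => [->|].
Qed.

Lemma codom_prefix_buffer psi : codom (prefix_buffer psi M) = mkseq psi M.
Proof.
rewrite codomE /mkseq -val_enum_ord -map_comp.
by apply: eq_map => j; rewrite /= ffunE ltn_ord.
Qed.

Lemma block_run psi n : tr_run (tr_init block_transducer) psi n =
  (inord (minn n M), prefix_buffer psi (minn n M)).
Proof.
elim: n => [|n IH].
  by rewrite min0n; congr pair; apply: val_inj; rewrite /= inordK.
rewrite /= IH /block_trans /= inordK ?ltnS ?geq_minr //.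
have [n_lt|n_ge] := ltnP n M.
  by rewrite n_lt (minn_idPl n_lt) block_write_prefix_buffer.
by rewrite ltnn (minn_idPr (leqW n_ge)).
Qed.

Lemma block_outprefix psi m : tr_outprefix (tr_init block_transducer) psi m =
  if m < M then [::] else tau (mkseq psi M) ++ mkseq (sdrop M psi) (m - M).
Proof.
elim: m => [|m IH]; first by rewrite M_gt0.
rewrite tr_outprefixS IH block_run /= /block_out /= inordK ?ltnS ?geq_minr //.
have [m_lt|m_ge] := ltnP m M.
  rewrite (ltn_eqF m_lt) block_write_prefix_buffer /=.
  case: (ltnP m.+1 M) => [m1_lt|m1_ge]; first by rewrite ltn_eqF.
  have m1E : m.+1 = M by apply/eqP; rewrite eqn_leq m1_ge m_lt.
  by rewrite m1E eqxx subnn codom_prefix_buffer cats0.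
rewrite gtn_eqF // eqxx ltnNge (leqW m_ge) /= -catA.
by rewrite subSn // mkseqS cats1 /sdrop subnK.
Qed.

Lemma block_transducer_output psi :
  tr_output_eq (tr_init block_transducer) psi (prefix_subst M tau psi).
Proof.
split=> [m|k].
  by rewrite block_outprefix; case: ifP => // _; exact: is_prefix_prepend_cat.
exists (k + M); rewrite block_outprefix ltnNge leq_addl /= size_cat size_mkseq.
by rewrite addnK leq_addl.
Qed.

End BlockTransducer.

Lemma prefix_subst_rational M M' tau sigma : 0 < M ->
  cancel (prefix_subst M tau) (prefix_subst M' sigma) ->
  cancel (prefix_subst M' sigma) (prefix_subst M tau) ->
  rational_homeo (prefix_subst M tau).
Proof.
move=> M_gt0 tauK sigmaK; split.
  by exists (prefix_subst M' sigma); split=> //; exact: prefix_subst_continuous.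
exists (block_transducer M tau) => psi; exact: block_transducer_output.
Qed.

Definition swap_word (a b w : seq bool) : seq bool :=
  let u := take (size a) w in let v := drop (size a) w in
  if u != a then b ++ w else if v != b then v else b ++ a.

Definition swap_cylinders (a b : seq bool) : cantor_space -> cantor_space :=
  prefix_subst (size a + size a) (swap_word a b).

Lemma swap_cylinders_cat a b u v z : size u = size a -> size v = size a ->
  swap_cylinders a b (prepend (u ++ v) z) =
  prepend (if u != a then b ++ u ++ v else if v != b then v else b ++ a) z.
Proof.
move=> size_u size_v; rewrite /swap_cylinders prefix_subst_prepend; last first.
  by rewrite size_cat size_u size_v.
by rewrite /swap_word -size_u take_size_cat // drop_size_cat.
Qed.

Lemma swap_cylinders_out a b x :
  ~ is_prefix a x -> swap_cylinders a b x = prepend b x.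
Proof.
move=> /is_prefixP x_a; rewrite -[in LHS](prepend_split (size a) x).
by rewrite swap_cylinders_cat ?size_mkseq // ifT // prepend_cat prepend_split.
Qed.

Lemma swap_cylinders_drop a b y : size a = size b -> ~ is_prefix b y ->
  swap_cylinders a b (prepend a y) = y.
Proof.
move=> size_ab /is_prefixP y_b.
rewrite -[in LHS](prepend_mkseq_sdrop (size a) y) -prepend_cat.
rewrite swap_cylinders_cat ?size_mkseq // eqxx /= size_ab.
by rewrite ifT ?prepend_mkseq_sdrop.
Qed.

Lemma swap_cylinders_swap a b z : size a = size b ->
  swap_cylinders a b (prepend a (prepend b z)) = prepend b (prepend a z).
Proof.
by move=> size_ab; rewrite -!prepend_cat swap_cylinders_cat // !eqxx.
Qed.

Lemma swap_cylindersK a b : size a = size b ->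
  cancel (swap_cylinders a b) (swap_cylinders b a).
Proof.
move=> size_ab x; have [x_a|x_a] := pselect (is_prefix a x); last first.
  by rewrite (swap_cylinders_out b x_a) swap_cylinders_drop.
rewrite -(prepend_sdrop_prefix x_a); set y := sdrop _ x.
have [y_b|y_b] := pselect (is_prefix b y); last first.
  by rewrite (swap_cylinders_drop size_ab y_b) swap_cylinders_out.
by rewrite -(prepend_sdrop_prefix y_b) !swap_cylinders_swap.
Qed.

Theorem proposition2p5 :
  forall E1 E2 : set cantor_space,
    clopen E1 -> E1 !=set0 -> E1 <> setT ->
    clopen E2 -> E2 !=set0 -> E2 <> setT ->
    exists g : cantor_space -> cantor_space,
      rational_homeo g /\ g @` E1 `<=` E2.
Proof.
move=> E1 E2 [_ E1_closed] _ E1_neqT [E2_open _] [x2 E2x2] _.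
have [x0 nE1x0] : exists x0, ~ E1 x0 by apply/setTPn/eqP.
have [n1 sub1] : exists n, is_prefix (mkseq x0 n) `<=` ~` E1.
  by apply: nbhs_prefix_sub; apply: open_nbhs_nbhs; split; rewrite ?openC.
have [n2 sub2] : exists n, is_prefix (mkseq x2 n) `<=` E2.
  by apply: nbhs_prefix_sub; apply: open_nbhs_nbhs.
pose N := (maxn n1 n2).+1; pose a := mkseq x0 N; pose b := mkseq x2 N.
have size_ab : size a = size b by rewrite !size_mkseq.
exists (swap_cylinders a b); split.
  apply: prefix_subst_rational (swap_cylindersK size_ab) _; last first.
    exact/swap_cylindersK/esym.
  by rewrite size_mkseq.
move=> _ [x E1x <-]; rewrite swap_cylinders_out => [|x_a].
  by apply/sub2/(is_prefix_mkseqW (leqW (leq_maxr n1 n2)))/is_prefix_prepend.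
exact: sub1 x (is_prefix_mkseqW (leqW (leq_maxl n1 n2)) x_a) E1x.
Qed.
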